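(* Let $a=a_1\cdots a_n$ be a signed permutation on $[n]$. Let $b=b_0b_1\cdots b_{2n+1}$ be the sequence on $\{-(n+1),\ldots,-1,0,1,\ldots,n\}$ given by $b_0=0$, $b_{2i-1}=-a_i$, $b_{2i}=a_i$ for $1\le i\le n$, and $b_{2n+1}=-(n+1)$. Let $\theta_1=(b_0,b_1)(b_2,b_3)\cdots(b_{2n},b_{2n+1})$ and $\theta_2=(0,-1)(1,-2)\cdots(n,-n-1)$, permutations of $\{-(n+1),\ldots,n\}$. Then $$d_r(a)\ \ge\ \frac{2n+2-C(\theta_1\theta_2)}{2}.$$
   Context: Permutations are multiplied as composition of maps, $(\sigma\tau)(x)=\sigma(\tau(x))$; $C(\pi)$ is the number of cycles of $\pi$, fixed points included. A signed permutation on $[n]$ is a sequence $a_1\cdots a_n$ with $a_k\in\{\pm1,\ldots,\pm n\}$ such that $|a_1|,\ldots,|a_n|$ is a permutation of $[n]$. A reversal $\varrho_{i,j}$ ($1\le i\le j\le n$) changes $a$ into $a_1\cdots a_{i-1}(-a_j)(-a_{j-1})\cdots(-a_i)a_{j+1}\cdots a_n$. The reversal distance $d_r(a)$ is the minimum number of reversals needed to transform $a$ into $12\cdots n$. *)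

From mathcomp Require Import all_boot all_order all_algebra all_fingroup.
Set Implicit Arguments. Unset Strict Implicit. Unset Printing Implicit Defensive.
Import GRing.Theory Num.Theory.
Local Open Scope ring_scope.

(* A signed permutation on [n] is a sequence a_1 ... a_n of nonzero integers
   (entries stored as a seq int, a_k = nth 0 a (k-1)) such that |a_1|,...,|a_n|
   is a permutation of 1..n. *)
Definition signed_perm (n : nat) (a : seq int) : Prop :=
  size a = n /\ perm_eq (map absz a) (iota 1 n).

Definition reversal (i j : nat) (a : seq int) : seq int :=
  take i.-1 a ++ map (fun x => - x) (rev (drop i.-1 (take j a))) ++ drop j a.

Definition valid_reversal (n : nat) (r : nat * nat) : bool :=
  (1 <= r.1)%N && (r.1 <= r.2)%N && (r.2 <= n)%N.

Definition id_signed (n : nat) : seq int := [seq (k%:Z) | k <- iota 1 n].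

Definition sorts_in (n : nat) (a : seq int) (k : nat) : Prop :=
  exists rs : seq (nat * nat),
    [/\ size rs = k, all (valid_reversal n) rs &
        foldl (fun s r => reversal r.1 r.2 s) a rs = id_signed n].

Definition bseq (n : nat) (a : seq int) (m : nat) : int :=
  if m == 0%N then 0
  else if m == (n.*2.+1)%N then - (n.+1)%:Z
  else if odd m then - nth 0 a m./2
  else nth 0 a m./2.-1.

(* The ground set {-(n+1), ..., n} is encoded as 'I_(2n+2) via x |-> x + n + 1. *)
Definition enc (n : nat) (x : int) : 'I_(n.*2.+2) := inord (absz (x + (n.+1)%:Z)).

Definition theta1 (n : nat) (a : seq int) : {perm 'I_(n.*2.+2)} :=
  (\prod_(k < n.+1) tperm (enc n (bseq n a k.*2)) (enc n (bseq n a k.*2.+1)))%g.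

Definition theta2 (n : nat) : {perm 'I_(n.*2.+2)} :=
  (\prod_(k < n.+1) tperm (enc n (k%:Z)) (enc n (- (k.+1)%:Z)))%g.

(* number of cycles of a permutation, fixed points included *)
Definition ncycles (T : finType) (s : {perm T}) : nat := #|porbits s|.

(* composition of maps as in the paper: (compose s t) x = s (t x).
   In MathComp, (t * s)%g x = s (t x). *)
Definition compose (T : finType) (s t : {perm T}) : {perm T} := (t * s)%g.

(* Positions 0..2n+1 of b carry the fixed pairing (0 1)(2 3)...(2n 2n+1), and
   theta1 is this pairing transported along the bijection m |-> b_m from
   positions to values.  The reversal rho_{i,j} acts on b by reflecting the
   positions 2i-1..2j; conjugating the pairing by that reflection only re-pairs
   the four boundary positions, so theta1 gets multiplied by two transpositions
   and C(theta1 theta2) grows by at most 2.  For 12...n we get theta1 = theta2,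
   an involution, so C(theta2 theta2) = 2n+2.  Hence k reversals sorting a force
   2n+2 <= C(theta1 theta2) + 2k. *)

From mathcomp Require Import zify lra.
From mathcomp Require Import all_boot all_order all_algebra all_fingroup.
Import GRing.Theory Num.Theory.

Set Implicit Arguments.
Unset Strict Implicit.
Unset Printing Implicit Defensive.

Lemma card_porbits1 (T : finType) : #|porbits (1 : {perm T})| = #|T|.
Proof.
have orbit1 x : porbit (1 : {perm T}) x = [set x].
  apply/setP => y; rewrite inE; apply/porbitP/eqP => [[i ->]|->].
    by rewrite expg1n perm1.
  by exists 0; rewrite expg0 perm1.
by rewrite /porbits card_imset // => x y; rewrite !orbit1; apply: set1_inj.
Qed.

Lemma card_porbits_mul_tperm (T : finType) (s : {perm T}) x y :
  #|porbits (s * tperm x y)%g| <= #|porbits s| + 1.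
Proof.
rewrite -porbitsV invMg tpermV -(porbitsV s).
have /= cycle_count := porbits_mul_tperm s^-1 x y.
apply: leq_trans (leq_addr (x \notin porbit s^-1 y).*2 _) _.
by rewrite cycle_count leq_add2l leq_b1.
Qed.

Lemma card_porbits_mul_tperm2 (T : finType) (s : {perm T}) x y u v :
  #|porbits (s * (tperm x y * tperm u v))%g| <= #|porbits s| + 2.
Proof.
rewrite mulgA; apply: leq_trans (card_porbits_mul_tperm _ u v) _.
by rewrite -[2]/(1 + 1) addnA leq_add2r card_porbits_mul_tperm.
Qed.

Definition swap_nat (x y z : nat) : nat := if z == x then y else if z == y then x else z.

Lemma val_tperm N (x y z : 'I_N) : val (tperm x y z) = swap_nat x y z.
Proof.
rewrite /swap_nat !(inj_eq val_inj).
case: tpermP => [->|->|/eqP/negbTE-> /eqP/negbTE->] //; first by rewrite eqxx.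
by case: eqP => [->|]; rewrite ?eqxx.
Qed.

Section InvolutionPerm.

Variables (N : nat) (f : nat -> nat).
Hypothesis f_lt : forall z, z < N.+1 -> f z < N.+1.
Hypothesis fK : forall z, z < N.+1 -> f (f z) = z.

Definition ord_map (x : 'I_N.+1) : 'I_N.+1 := inord (f x).

Lemma val_ord_map x : val (ord_map x) = f x.
Proof. exact/inordK/f_lt. Qed.

Lemma ord_mapK : involutive ord_map.
Proof. by move=> x; apply: val_inj; rewrite !val_ord_map fK. Qed.

Definition invol_perm : {perm 'I_N.+1} := perm (inv_inj ord_mapK).

Lemma val_invol_perm x : val (invol_perm x) = f x.
Proof. by rewrite permE val_ord_map. Qed.

Lemma invol_permK : involutive invol_perm.
Proof. by move=> x; rewrite !permE ord_mapK. Qed.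

End InvolutionPerm.

Definition pair_swap (z : nat) : nat := if odd z then z.-1 else z.+1.

Definition block_flip (i j z : nat) : nat :=
  if i.*2.-1 <= z <= j.*2 then i.*2 + j.*2 - 1 - z else z.

Variant pair_swap_spec z : nat -> Prop :=
  | PairSwapOdd of z %% 2 = 1 : pair_swap_spec z z.-1
  | PairSwapEven of z %% 2 = 0 : pair_swap_spec z z.+1.

Lemma pair_swapP z : pair_swap_spec z (pair_swap z).
Proof. by rewrite /pair_swap; case: ifP => h; constructor; rewrite modn2 h. Qed.

Variant block_flip_spec i j z : nat -> Prop :=
  | BlockFlipIn of i.*2.-1 <= z <= j.*2 : block_flip_spec i j z (i.*2 + j.*2 - 1 - z)
  | BlockFlipOut of ~~ (i.*2.-1 <= z <= j.*2) : block_flip_spec i j z z.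

Lemma block_flipP i j z : block_flip_spec i j z (block_flip i j z).
Proof. by rewrite /block_flip; case: ifP => [|/negbT]; constructor. Qed.

Variant swap_nat_spec x y z : nat -> Prop :=
  | SwapNatL of z = x : swap_nat_spec x y z y
  | SwapNatR of z = y & z <> x : swap_nat_spec x y z x
  | SwapNatNone of z <> x & z <> y : swap_nat_spec x y z z.

Lemma swap_natP x y z : swap_nat_spec x y z (swap_nat x y z).
Proof. by rewrite /swap_nat; do 2?case: eqP => ?; constructor. Qed.

Lemma pair_swapK : involutive pair_swap.
Proof. by move=> z; case: pair_swapP; case: pair_swapP; lia. Qed.

(* Reflecting the positions 2i-1..2j preserves the pairs inside that block
   and re-pairs the two boundary pairs {2i-2, 2i-1} and {2j, 2j+1}. *)
Lemma block_flip_pair_swap i j z : 0 < i -> i <= j ->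
  block_flip i j (pair_swap (block_flip i j z)) =
  swap_nat i.*2.-2 j.*2.+1 (swap_nat i.*2.-1 j.*2 (pair_swap z)).
Proof.
move=> i_gt0 le_ij.
have := block_flipP i j (pair_swap (block_flip i j z)).
have := pair_swapP (block_flip i j z); have := block_flipP i j z.
have := swap_natP i.*2.-2 j.*2.+1 (swap_nat i.*2.-1 j.*2 (pair_swap z)).
have := swap_natP i.*2.-1 j.*2 (pair_swap z); have := pair_swapP z.
set u := block_flip i j z; set v := pair_swap u; set w := block_flip i j v.
set y := pair_swap z; set t := swap_nat _ _ y; set r := swap_nat _ _ t.
clearbody u v w y t r.
(* Writing i as i'.+1 removes the truncated subtractions i.*2.-1 and i.*2.-2. *)
case: i i_gt0 le_ij => // i _ le_ij; rewrite !doubleS /=.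
by case=> [?|?]; do 2 case=> [?|? ?|? ?]; do 3 case=> [?|?]; lia.
Qed.

Section Positions.

Variable n : nat.
Local Notation N := n.*2.+1.

Lemma pair_swap_lt z : z < N.+1 -> pair_swap z < N.+1.
Proof. by case: pair_swapP; lia. Qed.

Definition pairing : {perm 'I_N.+1} :=
  invol_perm pair_swap_lt (fun z _ => pair_swapK z).

Lemma prod_tperm_pairs M (x : 'I_N.+1) : M <= n.+1 ->
  val ((\prod_(k < M) tperm (inord k.*2) (inord k.*2.+1))%g x) =
  if x < M.*2 then pair_swap x else x.
Proof.
elim: M => [|M IH] leMn; first by rewrite big_ord0 perm1.
rewrite big_ord_recr permM val_tperm IH ?(ltnW leMn) //= !inordK; try lia.
by case: pair_swapP => ?; do 2!case: ifP => ?; case: swap_natP; lia.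
Qed.

Lemma pairingE : (\prod_(k < n.+1) tperm (inord k.*2) (inord k.*2.+1))%g = pairing.
Proof.
apply/permP => x; apply: val_inj.
by rewrite prod_tperm_pairs // val_invol_perm ltn_ord.
Qed.

Variables i j : nat.
Hypotheses (i_gt0 : 0 < i) (le_ij : i <= j) (le_jn : j <= n).

Lemma block_flip_lt z : z < N.+1 -> block_flip i j z < N.+1.
Proof. by case: block_flipP; lia. Qed.

Lemma block_flipK z : z < N.+1 -> block_flip i j (block_flip i j z) = z.
Proof. by case: block_flipP; case: block_flipP; lia. Qed.

Definition block_flip_perm : {perm 'I_N.+1} := invol_perm block_flip_lt block_flipK.

Lemma pairing_conj_block_flip :
  (pairing ^ block_flip_perm =
   pairing * (tperm (inord i.*2.-1) (inord j.*2) * tperm (inord i.*2.-2) (inord j.*2.+1)))%g.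
Proof.
apply/permP => x; rewrite -{1}(invol_permK block_flip_lt block_flipK x) permJ.
apply: val_inj; rewrite !permM !val_tperm !val_invol_perm !inordK; try lia.
exact: block_flip_pair_swap.
Qed.

End Positions.

Lemma val_enc n (x : int) : (- (n.+1)%:Z <= x <= n%:Z)%R ->
  val (enc n x) = absz (x + (n.+1)%:Z)%R.
Proof. by move=> x_bd; rewrite /enc /= inordK //; lia. Qed.

Lemma enc_inj n (x y : int) : (- (n.+1)%:Z <= x <= n%:Z)%R -> (- (n.+1)%:Z <= y <= n%:Z)%R ->
  enc n x = enc n y -> x = y.
Proof. by move=> x_bd y_bd /(congr1 val); rewrite !val_enc //; lia. Qed.

Lemma bseq_odd n a p : p < n -> bseq n a p.*2.+1 = (- nth 0%R a p)%R.
Proof. by move=> lt_p; rewrite /bseq /= eqSS ifF ?odd_double ?uphalf_double //; lia. Qed.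

Lemma bseq_even n a p : p < n -> bseq n a p.*2.+2 = nth 0%R a p.
Proof. by move=> lt_p; rewrite /bseq /= ifF ?odd_double ?doubleK //; lia. Qed.

Variant bseq_spec n (a : seq int) : nat -> int -> Prop :=
  | BseqFirst : bseq_spec n a 0 0
  | BseqLast : bseq_spec n a n.*2.+1 (- (n.+1)%:Z)%R
  | BseqOdd p of p < n : bseq_spec n a p.*2.+1 (- nth 0%R a p)%R
  | BseqEven p of p < n : bseq_spec n a p.*2.+2 (nth 0%R a p).

Lemma bseqP n a m : m < n.*2.+2 -> bseq_spec n a m (bseq n a m).
Proof.
move=> lt_m; rewrite /bseq; case: eqP => [->|m_gt0]; first exact: BseqFirst.
case: eqP => [->|m_neq]; first exact: BseqLast.
have m_eq := odd_double_half m; case: ifP => odd_m.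
- by rewrite {1}(_ : m = (m./2).*2.+1); [constructor | ]; lia.
- by rewrite {1}(_ : m = (m./2.-1).*2.+2); [constructor | ]; lia.
Qed.

Section SignedPermutation.

Variables (n : nat) (a : seq int).
Hypothesis a_sp : signed_perm n a.
Local Notation N := n.*2.+1.

Lemma signed_perm_abs p : p < n -> 0 < absz (nth 0%R a p) <= n.
Proof.
case: a_sp => size_a perm_a lt_p.
have : absz (nth 0%R a p) \in iota 1 n.
  by rewrite -(perm_mem perm_a) -(nth_map _ 0%R) ?mem_nth ?size_map ?size_a.
by rewrite mem_iota; lia.
Qed.

Lemma signed_perm_abs_inj p q : p < n -> q < n ->
  absz (nth 0%R a p) = absz (nth 0%R a q) -> p = q.
Proof.
case: a_sp => size_a perm_a lt_p lt_q eq_pq.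
have uniq_a : uniq (map absz a) by rewrite (perm_uniq perm_a) iota_uniq.
apply/eqP; rewrite -(nth_uniq 0 _ _ uniq_a) ?size_map ?size_a //.
by rewrite !(nth_map 0%R) ?size_a // eq_pq.
Qed.

Lemma bseq_bounds m : m < N.+1 -> (- (n.+1)%:Z <= bseq n a m <= n%:Z)%R.
Proof.
by case/(bseqP a) => [||p /signed_perm_abs|p /signed_perm_abs]; lia.
Qed.

Lemma bseq_inj m1 m2 : m1 < N.+1 -> m2 < N.+1 -> bseq n a m1 = bseq n a m2 -> m1 = m2.
Proof.
move=> /(bseqP a) [||p lt_p|p lt_p] /(bseqP a) [||q lt_q|q lt_q] eq_b;
  try have := signed_perm_abs lt_p; try have := signed_perm_abs lt_q; try lia.
all: have eq_qp : q = p by apply: signed_perm_abs_inj; lia.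
all: by subst q; lia.
Qed.

Definition bseq_enc (x : 'I_N.+1) : 'I_N.+1 := enc n (bseq n a x).

Lemma bseq_enc_inj : injective bseq_enc.
Proof.
move=> x y /enc_inj eq_b; apply/val_inj/bseq_inj; rewrite ?ltn_ord //.
exact: eq_b (bseq_bounds (ltn_ord x)) (bseq_bounds (ltn_ord y)).
Qed.

Definition bseq_perm : {perm 'I_N.+1} := perm bseq_enc_inj.

Lemma theta1_conj : theta1 n a = (pairing n ^ bseq_perm)%g.
Proof.
rewrite -pairingE (big_morph (conjg^~ bseq_perm) (fun s t => conjMg s t _) (conj1g _)).
apply: eq_bigr => k _; rewrite tpermJ !permE /bseq_enc /= !inordK //.
all: by have := ltn_ord k; lia.
Qed.

End SignedPermutation.

Section Reversal.

Variables (i j : nat) (s : seq int).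
Hypotheses (i_gt0 : 0 < i) (le_ij : i <= j) (le_js : j <= size s).

Lemma nth_reversal p :
  nth 0%R (reversal i j s) p =
  if i.-1 <= p < j then (- nth 0%R s (i + j - 2 - p))%R else nth 0%R s p.
Proof.
have le_is : i.-1 <= size s by lia.
rewrite /reversal nth_cat size_takel //.
case: ltnP => [lt_pi|le_ip]; first by rewrite nth_take.
rewrite nth_cat size_map size_rev size_drop size_takel // ltn_sub2rE //.
have [lt_pj|le_jp] := ltnP p j; last by rewrite nth_drop; congr (nth _ _ _); lia.
have lt_p_seg : p - i.-1 < size (rev (drop i.-1 (take j s))).
  by rewrite size_rev size_drop size_takel //; lia.
rewrite (nth_map 0%R) // nth_rev; last by rewrite size_rev in lt_p_seg.
rewrite size_drop size_takel // nth_drop nth_take; last lia.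
by congr (- nth _ _ _)%R; lia.
Qed.

Lemma perm_abs_reversal : perm_eq (map absz (reversal i j s)) (map absz s).
Proof.
rewrite /reversal !map_cat -map_comp (eq_map (fun x => abszN x)) map_rev.
rewrite !map_drop !map_take.
rewrite -[in X in perm_eq _ X](cat_take_drop j (map absz s)).
rewrite -[in X in perm_eq _ X](cat_take_drop i.-1 (take j _)) take_takel; last lia.
by rewrite -catA perm_cat2l perm_cat2r perm_rev.
Qed.

Lemma size_reversal : size (reversal i j s) = size s.
Proof. by rewrite -(size_map absz) (perm_size perm_abs_reversal) size_map. Qed.

End Reversal.

Section SignedReversal.

Variables (n : nat) (a : seq int) (i j : nat).
Hypotheses (a_sp : signed_perm n a) (i_gt0 : 0 < i) (le_ij : i <= j) (le_jn : j <= n).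

Lemma signed_perm_reversal : signed_perm n (reversal i j a).
Proof.
case: a_sp => size_a perm_a; have le_ja : j <= size a by rewrite size_a.
by split; [rewrite size_reversal | apply: perm_trans perm_a; apply: perm_abs_reversal].
Qed.

Lemma bseq_reversal m : m < n.*2.+2 ->
  bseq n (reversal i j a) m = bseq n a (block_flip i j m).
Proof.
have le_ja : j <= size a by case: a_sp => ->.
case/(bseqP (reversal i j a)) => [||p lt_p|p lt_p].
- by rewrite /block_flip ifF //; lia.
- by rewrite /block_flip ifF ?/bseq /= ?eqxx //; lia.
- rewrite nth_reversal //; case: block_flipP => h.
    have -> : i.*2 + j.*2 - 1 - p.*2.+1 = (i + j - 2 - p).*2.+2 by lia.
    by rewrite ifT ?bseq_even ?opprK //; lia.
  by rewrite ifF ?bseq_odd //; lia.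
- rewrite nth_reversal //; case: block_flipP => h.
    have -> : i.*2 + j.*2 - 1 - p.*2.+2 = (i + j - 2 - p).*2.+1 by lia.
    by rewrite ifT ?bseq_odd //; lia.
  by rewrite ifF ?bseq_even //; lia.
Qed.

Lemma bseq_perm_reversal :
  bseq_perm signed_perm_reversal = (block_flip_perm i_gt0 le_ij le_jn * bseq_perm a_sp)%g.
Proof.
apply/permP => x; rewrite permM !permE /bseq_enc bseq_reversal //.
by rewrite (val_ord_map (block_flip_lt i_gt0 le_ij le_jn)).
Qed.

Lemma theta1_reversal : exists x y u v : 'I_n.*2.+2,
  theta1 n (reversal i j a) = (theta1 n a * (tperm x y * tperm u v))%g.
Proof.
rewrite (theta1_conj signed_perm_reversal) bseq_perm_reversal conjgM.
rewrite pairing_conj_block_flip conjMg -theta1_conj conjMg !tpermJ.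
by do 4 eexists.
Qed.

Lemma ncycles_reversal :
  ncycles (compose (theta1 n (reversal i j a)) (theta2 n)) <=
  ncycles (compose (theta1 n a) (theta2 n)) + 2.
Proof.
have [x [y [u [v ->]]]] := theta1_reversal.
by rewrite /ncycles /compose mulgA card_porbits_mul_tperm2.
Qed.

End SignedReversal.

Lemma signed_perm_id n : signed_perm n (id_signed n).
Proof.
split; first by rewrite size_map size_iota.
by rewrite /id_signed -map_comp map_id_in.
Qed.

Lemma theta1_id n : theta1 n (id_signed n) = theta2 n.
Proof.
have nth_id p : p < n -> nth 0%R (id_signed n) p = (p.+1)%:Z%R.
  by move=> lt_p; rewrite (nth_map 0) ?size_iota // nth_iota // add1n.
apply: eq_bigr => k _; have lt_k := ltn_ord k; congr (tperm (enc n _) (enc n _)).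
- case: (nat_of_ord k) lt_k => [|p] lt_p //.
  by rewrite doubleS bseq_even ?nth_id.
- have [->|ne_kn] := eqVneq (nat_of_ord k) n; first by rewrite /bseq /= eqxx.
  by rewrite bseq_odd ?nth_id //; lia.
Qed.

Lemma ncycles_id n : ncycles (compose (theta1 n (id_signed n)) (theta2 n)) = n.*2.+2.
Proof.
have pairingK : (pairing n * pairing n = 1)%g.
  by apply/permP => x; rewrite permM perm1 invol_permK.
rewrite /ncycles /compose -{1}theta1_id (theta1_conj (signed_perm_id n)).
by rewrite -conjMg pairingK conj1g card_porbits1 card_ord.
Qed.

Lemma ncycles_sorting n a rs : signed_perm n a -> all (valid_reversal n) rs ->
  ncycles (compose (theta1 n (foldl (fun s r => reversal r.1 r.2 s) a rs)) (theta2 n)) <=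
  ncycles (compose (theta1 n a) (theta2 n)) + (size rs).*2.
Proof.
elim: rs a => [|[i j] rs IH] a a_sp /=; first by rewrite addn0.
case/andP => /andP[/andP[i_gt0 le_ij] le_jn] valid_rs.
apply: leq_trans (IH _ (signed_perm_reversal a_sp i_gt0 le_ij le_jn) valid_rs) _.
by have := ncycles_reversal a_sp i_gt0 le_ij le_jn; lia.
Qed.

Local Open Scope ring_scope.

Theorem proposition1 (n : nat) (a : seq int) :
  signed_perm n a ->
  forall k : nat, sorts_in n a k ->
    (((n.*2.+2)%:R - (ncycles (compose (theta1 n a) (theta2 n)))%:R) / 2 : rat)
      <= k%:R.
Proof.
move=> a_sp k [rs [size_rs valid_rs sorted_a]].
have := ncycles_sorting a_sp valid_rs; rewrite sorted_a ncycles_id size_rs.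
rewrite -(ler_nat rat) natrD -[k.*2]muln2 natrM => bound.
by rewrite ler_pdivrMr //; lra.
Qed.
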